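(* For every integer $d\ge3$, $$\lim_{\nu\downarrow0}\frac1\nu\big(\vartheta_{d,\nu}-\vartheta_{d,0}\big)=\frac{d}{2(d-2)^2},\qquad \lim_{\nu\to\infty}\nu\big(1-\vartheta_{d,\nu}\big)=\frac2d,$$ while for every $\nu>0$, $$\lim_{d\to\infty}d\big(1-\vartheta_{d,\nu}\big)=\frac{2}{\nu+2}.$$
   Context: For $d\ge2$ and $\nu\in[0,\infty)$ let $\beta_d=\sqrt{d-1}$, $\rho_d=2\sqrt{d-1}/d$, let $\Delta_{d,\nu}$ be the continued fraction $\Delta_{d,\nu}=\cfrac{1}{a_1-\cfrac{1}{a_2-\cfrac{1}{a_3-\cdots}}}$ with $a_i=\frac{2+i\nu}{\rho_d}$, and define $\vartheta_{d,\nu}=1-\Delta_{d,\nu}/\beta_d$. *)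

From Stdlib Require Import Reals.
From Coquelicot Require Import Coquelicot.
Open Scope R_scope.

Definition beta_d (d : nat) : R := sqrt (INR d - 1).
Definition rho_d (d : nat) : R := 2 * sqrt (INR d - 1) / INR d.

Definition cf_coef (d : nat) (nu : R) (i : nat) : R := (2 + INR i * nu) / rho_d d.

(* n-level truncation of the continued fraction starting at index i:
   cf_trunc a 0 i = 0,  cf_trunc a (n+1) i = 1 / (a i - cf_trunc a n (i+1)).
   So cf_trunc a n 1 = 1/(a_1 - 1/(a_2 - ... - 1/a_n)). *)
Fixpoint cf_trunc (a : nat -> R) (n i : nat) : R :=
  match n with
  | O => 0
  | S m => 1 / (a i - cf_trunc a m (S i))
  end.

Definition Delta (d : nat) (nu : R) : R :=
  real (Lim_seq (fun n => cf_trunc (cf_coef d nu) n 1%nat)).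

Definition theta (d : nat) (nu : R) : R := 1 - Delta d nu / beta_d d.

(** With [r = sqrt (d - 1)] and [x = 1/r], the coefficients are affine,
    [a_i = x + 1/x + i k] with [k = nu d / (2 r)], and for [k = 0] the continued
    fraction is the fixed point [x].  Its tails [Delta_i] satisfy
    [x - Delta_i = x Delta_i (i k + x - Delta_(i+1))], so the defect [x - Delta_1]
    is squeezed between [k G_1 - k^2 F_1] and [k G_1], where [G] and [F] solve the
    linearised recursions [G_i = x^2 (i + G_(i+1))] and
    [F_i = x^2 F_(i+1) + G_i^2 / x]; comparison goes through because a geometric
    supersolution of at most linear growth is nonnegative.  This gives the
    derivative at [nu = 0].  The two other limits only use the first step of the
    continued fraction, [1/a_1 <= Delta <= 1/(a_1 - x)]. *)

From Pilot Require Import Defs.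
From Stdlib Require Import Reals Lra Lia Psatz.
From Coquelicot Require Import Coquelicot.
Open Scope R_scope.

Lemma filterlim_of_abs_le {T : Type} {F : (T -> Prop) -> Prop} {FF : Filter F}
    (f g : T -> R) (L : R) :
  F (fun y => Rabs (f y - L) <= g y) -> filterlim g F (locally 0) ->
  filterlim f F (locally L).
Proof.
  intros Hfg Hg. apply filterlim_locally. intros eps.
  apply (filter_imp (fun y => Rabs (f y - L) <= g y /\ ball 0 eps (g y))).
  - intros y [Hle Hball]. change (Rabs (f y - L) < eps).
    change (Rabs (g y - 0) < eps) in Hball. apply Rabs_def2 in Hball. lra.
  - apply filter_and; [exact Hfg | exact (proj1 (filterlim_locally _ _) Hg eps)].
Qed.

Lemma filterlim_scal_at_right_0 (C : R) :
  filterlim (fun y => C * y) (at_right 0) (locally 0).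
Proof.
  eapply filterlim_filter_le_1; [apply filter_le_within|].
  replace 0 with (C * 0) at 2 by ring.
  apply (continuous_mult (fun _ => C) (fun y => y)); [apply continuous_const | apply continuous_id].
Qed.

Lemma filterlim_div_p_infty (C : R) :
  filterlim (fun y => C / y) (Rbar_locally p_infty) (locally 0).
Proof.
  replace 0 with (C * 0) by ring.
  apply (is_lim_scal_l (fun y => / y) C p_infty 0).
  apply (is_lim_inv (fun y => y) p_infty p_infty); [apply is_lim_id | discriminate].
Qed.

Lemma is_lim_seq_div_INR (C : R) : is_lim_seq (fun n => C / INR n) 0.
Proof.
  replace (Finite 0) with (Rbar_mult C 0) by (simpl; f_equal; ring).
  apply (is_lim_seq_scal_l (fun n => / INR n)).
  apply (is_lim_seq_inv INR p_infty); [apply is_lim_seq_INR | discriminate].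
Qed.

Lemma is_lim_seq_INR_mul_geom (q : R) : 0 < q < 1 -> is_lim_seq (fun n => INR n * q ^ n) 0.
Proof.
  intros Hq. set (p := sqrt q).
  assert (Hp : 0 < p < 1).
  { split; [apply sqrt_lt_R0; lra|]. rewrite <- sqrt_1. apply sqrt_lt_1; lra. }
  assert (Hpq : forall n, q ^ n = p ^ n * p ^ n).
  { intros n. rewrite <- Rpow_mult_distr. unfold p. rewrite sqrt_sqrt; lra. }
  set (h := / p - 1).
  assert (Hh : 0 < h) by (unfold h; rewrite <- Rinv_1; apply Rlt_0_minus, Rinv_lt_contravar; lra).
  (* Bernoulli's inequality for [1/p = 1 + h] bounds [n p^n], and [q^n = p^n p^n]. *)
  assert (Hbern : forall n, INR n * p ^ n <= / h).
  { intros n. apply (Rmult_le_reg_l h); [lra|]. rewrite Rinv_r by lra.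
    pose proof (Rle_pow_lin h n (Rlt_le _ _ Hh)) as B.
    replace (1 + h) with (/ p) in B by (unfold h; ring).
    rewrite pow_inv in B. apply (Rmult_le_compat_r (p ^ n)) in B; [|apply pow_le; lra].
    rewrite Rinv_l in B by (apply pow_nonzero; lra).
    pose proof (pow_le p n). nra. }
  apply (is_lim_seq_le_le (fun _ => 0) _ (fun n => / h * p ^ n)).
  - intros n. rewrite Hpq. pose proof (pos_INR n). pose proof (pow_le p n).
    specialize (Hbern n). split; nra.
  - apply is_lim_seq_const.
  - replace (Finite 0) with (Rbar_mult (/ h) 0) by (simpl; f_equal; ring).
    apply is_lim_seq_scal_l, is_lim_seq_geom. rewrite Rabs_pos_eq; lra.
Qed.

Lemma supersolution_nonneg (q B C : R) (s : nat -> R) :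
  0 < q < 1 -> (forall i, q * s (S i) <= s i) -> (forall i, - (B + C * INR i) <= s i) ->
  forall i, 0 <= s i.
Proof.
  intros Hq Hrec Hlow i.
  assert (Hiter : forall n, q ^ n * s (n + i)%nat <= s i).
  { induction n as [|n IH]; simpl; [lra|].
    pose proof (Hrec (n + i)%nat). pose proof (pow_le q n). nra. }
  assert (Hlim : is_lim_seq (fun n => (B + C * INR i) * q ^ n + C * (INR n * q ^ n)) 0).
  { replace 0 with ((B + C * INR i) * 0 + C * 0) by ring.
    apply is_lim_seq_plus'; apply is_lim_seq_mult'; try apply is_lim_seq_const;
      [apply is_lim_seq_geom; rewrite Rabs_pos_eq | apply is_lim_seq_INR_mul_geom]; lra. }
  cut (Rbar_le (- s i) 0); [simpl; lra|].
  refine (is_lim_seq_le (fun _ => - s i) _ (- s i) 0 _ (is_lim_seq_const _) Hlim).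
  intros n. specialize (Hlow (n + i)%nat). rewrite plus_INR in Hlow.
  pose proof (Hiter n). pose proof (pow_le q n). nra.
Qed.

(* [tail_slope x i = sum_(j>=0) x^(2j+2) (i+j)] and
   [tail_curv x i = sum_(j>=0) x^(2j) (tail_slope x (i+j))^2 / x]. *)
Definition tail_slope (x : R) (i : nat) : R :=
  x ^ 2 / (1 - x ^ 2) * INR i + (x ^ 2 / (1 - x ^ 2)) ^ 2.

Definition tail_curv (x : R) (i : nat) : R :=
  let u := / (1 - x ^ 2) in
  (u * tail_slope x i ^ 2 + 2 * x ^ 4 * u ^ 3 * tail_slope x i
   + x ^ 6 * (1 + x ^ 2) * u ^ 5) / x.

Definition cf_tail (a : nat -> R) (i : nat) : R := real (Lim_seq (fun n => cf_trunc a n i)).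

Section TailExpansion.
Variable x : R.
Hypothesis Hx : 0 < x < 1.

Lemma tail_slope_rec i : tail_slope x i = x ^ 2 * (INR i + tail_slope x (S i)).
Proof. unfold tail_slope. rewrite S_INR. field. nra. Qed.

Lemma tail_slope_ge0 i : 0 <= tail_slope x i.
Proof.
  unfold tail_slope. assert (0 <= x ^ 2 / (1 - x ^ 2)) by (apply Rdiv_le_0_compat; nra).
  pose proof (pos_INR i). pose proof (pow2_ge_0 (x ^ 2 / (1 - x ^ 2))). nra.
Qed.

Lemma tail_curv_rec i :
  tail_curv x i = x ^ 2 * tail_curv x (S i) + tail_slope x i ^ 2 / x.
Proof. unfold tail_curv, tail_slope. rewrite S_INR. field. nra. Qed.

Lemma tail_curv_ge0 i : 0 <= tail_curv x i.
Proof.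
  unfold tail_curv. pose proof (tail_slope_ge0 i).
  assert (0 < / (1 - x ^ 2)) by (apply Rinv_0_lt_compat; nra).
  apply Rdiv_le_0_compat; [|lra].
  repeat apply Rplus_le_le_0_compat; repeat apply Rmult_le_pos; try apply pow_le; try lra.
  pose proof (pow2_ge_0 x); lra.
Qed.

End TailExpansion.

Section AffineContinuedFraction.
Variables (a : nat -> R) (x k : R).
Hypothesis Hx : 0 < x < 1.
Hypothesis Hk : 0 <= k.
Hypothesis Ha : forall i, a i = x + / x + INR i * k.

Lemma cf_denom_ge i t : t <= x -> / x <= a i - t.
Proof. intros Ht. rewrite Ha. pose proof (pos_INR i). nra. Qed.

Lemma cf_step_le i t t' : t <= t' <= x -> 1 / (a i - t) <= 1 / (a i - t').
Proof.
  intros Ht. pose proof (cf_denom_ge i t' (proj2 Ht)).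
  assert (0 < / x) by (apply Rinv_0_lt_compat; lra).
  unfold Rdiv. rewrite !Rmult_1_l. apply Rinv_le_contravar; lra.
Qed.

Lemma cf_step_bounds i t : 0 <= t <= x -> 0 < 1 / (a i - t) <= x.
Proof.
  intros Ht. pose proof (cf_denom_ge i t (proj2 Ht)).
  assert (0 < / x) by (apply Rinv_0_lt_compat; lra).
  split; [apply Rdiv_lt_0_compat; lra|].
  unfold Rdiv. rewrite Rmult_1_l, <- (Rinv_inv x). apply Rinv_le_contravar; lra.
Qed.

Lemma cf_trunc_bounds n i : 0 <= cf_trunc a n i <= x.
Proof.
  revert i; induction n as [|n IH]; intros i; simpl; [lra|].
  pose proof (cf_step_bounds i _ (IH (S i))). lra.
Qed.

Lemma cf_trunc_le_succ n i : cf_trunc a n i <= cf_trunc a (S n) i.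
Proof.
  revert i; induction n as [|n IH]; intros i.
  - simpl. pose proof (cf_step_bounds i 0). lra.
  - apply cf_step_le. split; [apply IH | apply (cf_trunc_bounds (S n) (S i))].
Qed.

Lemma is_lim_seq_cf_tail i : is_lim_seq (fun n => cf_trunc a n i) (cf_tail a i).
Proof.
  assert (Hex : ex_finite_lim_seq (fun n => cf_trunc a n i)).
  { apply (ex_finite_lim_seq_incr _ x); intros n;
      [apply cf_trunc_le_succ | apply cf_trunc_bounds]. }
  destruct Hex as [l Hl]. unfold cf_tail. rewrite (is_lim_seq_unique _ _ Hl). exact Hl.
Qed.

Lemma cf_tail_bounds i : 0 <= cf_tail a i <= x.
Proof.
  pose proof (is_lim_seq_cf_tail i) as Hl. split.
  - refine (is_lim_seq_le (fun _ => 0) _ 0 (cf_tail a i) _ (is_lim_seq_const 0) Hl).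
    intros n; apply cf_trunc_bounds.
  - refine (is_lim_seq_le _ (fun _ => x) (cf_tail a i) x _ Hl (is_lim_seq_const x)).
    intros n; apply cf_trunc_bounds.
Qed.

Lemma cf_tail_rec i : cf_tail a i = 1 / (a i - cf_tail a (S i)).
Proof.
  pose proof (cf_denom_ge i _ (proj2 (cf_tail_bounds (S i)))).
  assert (0 < / x) by (apply Rinv_0_lt_compat; lra).
  assert (Hcont : continuity_pt (fun t => 1 / (a i - t)) (cf_tail a (S i))).
  { apply continuity_pt_filterlim, (ex_derive_continuous (fun t => 1 / (a i - t))).
    auto_derive. lra. }
  assert (Hlim : is_lim_seq (fun n => cf_trunc a n i) (1 / (a i - cf_tail a (S i)))).
  { apply is_lim_seq_incr_1.
    exact (is_lim_seq_continuous _ _ _ Hcont (is_lim_seq_cf_tail (S i))). }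
  unfold cf_tail at 1. rewrite (is_lim_seq_unique _ _ Hlim). reflexivity.
Qed.

Lemma cf_tail_step_bounds i : 1 / a i <= cf_tail a i <= 1 / (a i - x).
Proof.
  rewrite cf_tail_rec. pose proof (cf_tail_bounds (S i)).
  rewrite <- (Rminus_0_r (a i)) at 1. split; apply cf_step_le; lra.
Qed.

Lemma cf_tail_defect_eq i :
  x - cf_tail a i = x * cf_tail a i * (INR i * k + (x - cf_tail a (S i))).
Proof.
  pose proof (cf_denom_ge i _ (proj2 (cf_tail_bounds (S i)))).
  assert (0 < / x) by (apply Rinv_0_lt_compat; lra).
  assert (x * / x = 1) by (field; lra).
  rewrite (cf_tail_rec i), Ha in *. field. split; nra.
Qed.

Lemma cf_tail_lower_bound i : x - k * tail_slope x i <= cf_tail a i.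
Proof.
  cut (0 <= k * tail_slope x i - (x - cf_tail a i)); [lra|].
  revert i. apply (supersolution_nonneg (x ^ 2) x 0); [nra| |].
  - intros i. rewrite (tail_slope_rec x Hx i), (cf_tail_defect_eq i).
    pose proof (cf_tail_bounds i). pose proof (cf_tail_bounds (S i)). pose proof (pos_INR i).
    assert (0 <= INR i * k + (x - cf_tail a (S i))) by nra.
    assert (0 <= x * (x - cf_tail a i) * (INR i * k + (x - cf_tail a (S i)))).
    { apply Rmult_le_pos; [apply Rmult_le_pos|]; lra. }
    nra.
  - intros i. pose proof (cf_tail_bounds i). pose proof (tail_slope_ge0 x Hx i). nra.
Qed.

Lemma cf_tail_upper_bound i :
  cf_tail a i <= x - k * tail_slope x i + k ^ 2 * tail_curv x i.
Proof.
  cut (0 <= x - cf_tail a i - k * tail_slope x i + k ^ 2 * tail_curv x i); [lra|].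
  revert i. set (c := x ^ 2 / (1 - x ^ 2)).
  apply (supersolution_nonneg (x ^ 2) (k * c ^ 2) (k * c)); [nra| |].
  - intros i.
    pose proof (cf_tail_lower_bound i). pose proof (cf_tail_lower_bound (S i)).
    pose proof (cf_tail_bounds i). pose proof (cf_tail_bounds (S i)). pose proof (pos_INR i).
    pose proof (tail_slope_rec x Hx i) as HG. pose proof (tail_curv_rec x Hx i) as HF.
    set (G := tail_slope x i) in *. set (G' := tail_slope x (S i)) in *.
    set (e := x - cf_tail a i). set (P := INR i * k + (x - cf_tail a (S i))).
    (* [e = x^2 P - x e P]; the quadratic term is controlled by the first-order bound. *)
    assert (Hcorr : x * e * P <= k ^ 2 * G ^ 2 / x).
    { replace (k ^ 2 * G ^ 2 / x) with (x * (k * G) * (k * (INR i + G')))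
        by (rewrite HG; field; lra).
      apply Rmult_le_compat; unfold e, P; try apply Rmult_le_pos; nra. }
    assert (Hdefect : e = x ^ 2 * P - x * e * P) by (unfold e, P; rewrite (cf_tail_defect_eq i) at 1; ring).
    assert (k * G = x ^ 2 * (k * INR i) + x ^ 2 * (k * G')) by (rewrite HG; ring).
    assert (k ^ 2 * tail_curv x i = x ^ 2 * (k ^ 2 * tail_curv x (S i)) + k ^ 2 * G ^ 2 / x)
      by (rewrite HF; field; lra).
    unfold e, P in *. lra.
  - intros i. pose proof (cf_tail_bounds i). pose proof (tail_curv_ge0 x Hx i).
    unfold tail_slope. fold c. nra.
Qed.
End AffineContinuedFraction.

Lemma beta_d_sq d : (1 <= d)%nat -> beta_d d ^ 2 = INR d - 1.
Proof.
  intros Hd. apply le_INR in Hd. unfold beta_d. simpl. rewrite Rmult_1_r.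
  apply sqrt_sqrt. simpl in Hd. lra.
Qed.

Lemma beta_d_gt1 d : (3 <= d)%nat -> 1 < beta_d d.
Proof.
  intros Hd. pose proof (beta_d_sq d ltac:(lia)) as Hsq.
  apply le_INR in Hd. simpl in Hd. pose proof (sqrt_pos (INR d - 1)). fold (beta_d d) in *. nra.
Qed.

Lemma inv_beta_d_bounds d : (3 <= d)%nat -> 0 < / beta_d d < 1.
Proof.
  intros Hd. pose proof (beta_d_gt1 d Hd).
  split; [apply Rinv_0_lt_compat; lra|]. rewrite <- Rinv_1. apply Rinv_lt_contravar; lra.
Qed.

Lemma cf_coef_affine d nu : (3 <= d)%nat -> forall i,
  cf_coef d nu i = / beta_d d + / / beta_d d + INR i * (nu * (INR d / (2 * beta_d d))).
Proof.
  intros Hd i. pose proof (beta_d_gt1 d Hd). pose proof (beta_d_sq d ltac:(lia)) as Hsq.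
  rewrite Rinv_inv. unfold cf_coef, rho_d. fold (beta_d d).
  replace (INR d) with (beta_d d ^ 2 + 1) by lra. field. split; nra.
Qed.

Lemma theta_diff_quot_bound d : (3 <= d)%nat -> exists C, forall nu, 0 < nu ->
  Rabs ((theta d nu - theta d 0) / nu - INR d / (2 * (INR d - 2) ^ 2)) <= C * nu.
Proof.
  intros Hd. pose proof (beta_d_gt1 d Hd) as Hr. pose proof (beta_d_sq d ltac:(lia)) as Hsq.
  pose proof (inv_beta_d_bounds d Hd) as Hx. set (r := beta_d d) in *.
  set (x := / r) in *. set (G := tail_slope x 1). set (F := tail_curv x 1).
  set (kappa := INR d / (2 * r)).
  assert (Hkappa : 0 <= kappa) by (apply Rdiv_le_0_compat; nra).
  assert (Hfirst : forall nu, 0 <= nu ->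
            x - nu * kappa * G <= Defs.Delta d nu <= x - nu * kappa * G + (nu * kappa) ^ 2 * F).
  { intros nu Hnu. assert (Hk : 0 <= nu * kappa) by nra.
    split; [apply (cf_tail_lower_bound _ _ _ Hx Hk (cf_coef_affine d nu Hd)) |
            apply (cf_tail_upper_bound _ _ _ Hx Hk (cf_coef_affine d nu Hd))]. }
  assert (HDelta0 : Defs.Delta d 0 = x) by (pose proof (Hfirst 0 (Rle_refl 0)); nra).
  assert (HL : INR d / (2 * (INR d - 2) ^ 2) = kappa * G / r).
  { unfold kappa, G, tail_slope, x. replace (INR d) with (r ^ 2 + 1) by lra.
    simpl INR. field. split; nra. }
  exists (kappa ^ 2 * F / r). intros nu Hnu.
  pose proof (Hfirst nu (Rlt_le _ _ Hnu)) as [Hlo Hhi].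
  rewrite HL. unfold theta. fold r. rewrite HDelta0.
  replace ((1 - Defs.Delta d nu / r - (1 - x / r)) / nu - kappa * G / r)
    with ((x - nu * kappa * G - Defs.Delta d nu) / nu / r) by (unfold x; field; lra).
  replace (kappa ^ 2 * F / r * nu) with ((nu * kappa) ^ 2 * F / nu / r) by (field; lra).
  unfold Rdiv. rewrite Rabs_mult, Rabs_mult, (Rabs_pos_eq (/ nu)), (Rabs_pos_eq (/ r)).
  2, 3: apply Rlt_le, Rinv_0_lt_compat; lra.
  assert (0 <= (nu * kappa) ^ 2 * F) by (apply Rmult_le_pos; [apply pow2_ge_0 | apply tail_curv_ge0; lra]).
  apply Rmult_le_compat_r; [apply Rlt_le, Rinv_0_lt_compat; lra|].
  apply Rmult_le_compat_r; [apply Rlt_le, Rinv_0_lt_compat; lra|].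
  apply Rabs_le. lra.
Qed.

Lemma theta_slope_at_0 d : (3 <= d)%nat ->
  filterlim (fun nu => (theta d nu - theta d 0) / nu) (at_right 0)
    (locally (INR d / (2 * (INR d - 2) ^ 2))).
Proof.
  intros Hd. destruct (theta_diff_quot_bound d Hd) as [C HC].
  apply (filterlim_of_abs_le _ (fun nu => C * nu)); [| apply filterlim_scal_at_right_0].
  exists (mkposreal 1 Rlt_0_1). intros nu _ Hnu. exact (HC nu Hnu).
Qed.

Lemma one_minus_theta_bounds d nu : (3 <= d)%nat -> 0 <= nu ->
  2 / ((2 + nu) * INR d) <= 1 - theta d nu <= 2 / ((2 + nu) * INR d - 2).
Proof.
  intros Hd Hnu. pose proof (beta_d_gt1 d Hd) as Hr. pose proof (beta_d_sq d ltac:(lia)) as Hsq.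
  pose proof (inv_beta_d_bounds d Hd) as Hx. set (r := beta_d d) in *.
  assert (Hk : 0 <= nu * (INR d / (2 * r))) by (apply Rmult_le_pos; [|apply Rdiv_le_0_compat]; nra).
  pose proof (cf_tail_step_bounds _ _ _ Hx Hk (cf_coef_affine d nu Hd) 1) as [Hlo Hhi].
  unfold theta. fold r. change (Defs.Delta d nu) with (cf_tail (cf_coef d nu) 1).
  replace (1 - (1 - cf_tail (cf_coef d nu) 1 / r)) with (cf_tail (cf_coef d nu) 1 / r) by ring.
  assert (Ha1 : cf_coef d nu 1 = (2 + nu) * INR d / (2 * r)).
  { unfold cf_coef, rho_d. change (sqrt (INR d - 1)) with r. simpl INR. field. split; nra. }
  rewrite Ha1 in Hlo, Hhi. replace (INR d) with (r ^ 2 + 1) in * by lra.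
  split.
  - replace (2 / ((2 + nu) * (r ^ 2 + 1))) with (1 / ((2 + nu) * (r ^ 2 + 1) / (2 * r)) / r)
      by (field; repeat split; nra).
    apply Rmult_le_compat_r; [apply Rlt_le, Rinv_0_lt_compat; lra | exact Hlo].
  - replace (2 / ((2 + nu) * (r ^ 2 + 1) - 2)) with (1 / ((2 + nu) * (r ^ 2 + 1) / (2 * r) - / r) / r)
      by (field; repeat split; nra).
    apply Rmult_le_compat_r; [apply Rlt_le, Rinv_0_lt_compat; lra | exact Hhi].
Qed.

Lemma theta_nu_infty d : (3 <= d)%nat ->
  filterlim (fun nu => nu * (1 - theta d nu)) (Rbar_locally p_infty) (locally (2 / INR d)).
Proof.
  intros Hd. apply (filterlim_of_abs_le _ (fun nu => 4 / nu)); [| apply filterlim_div_p_infty].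
  exists 0. intros nu Hnu.
  pose proof (one_minus_theta_bounds d nu Hd (Rlt_le _ _ Hnu)) as [Hlo Hhi].
  assert (HD : 3 <= INR d) by (apply le_INR in Hd; simpl in Hd; lra).
  set (D := INR d) in *. set (b := 1 - theta d nu) in *.
  assert (Hup : nu * b - 2 / D <= 0).
  { replace (nu * b - 2 / D) with
      (nu * (b - 2 / ((2 + nu) * D - 2)) - (4 * D - 4) / (D * ((2 + nu) * D - 2)))
      by (field; split; nra).
    assert (0 <= (4 * D - 4) / (D * ((2 + nu) * D - 2))) by (apply Rdiv_le_0_compat; nra).
    nra. }
  assert (Hdown : - (4 / nu) <= nu * b - 2 / D).
  { replace (nu * b - 2 / D) with (nu * (b - 2 / ((2 + nu) * D)) - 4 / ((2 + nu) * D))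
      by (field; split; nra).
    assert (4 / ((2 + nu) * D) <= 4 / nu).
    { apply Rmult_le_compat_l; [lra|]. apply Rinv_le_contravar; nra. }
    nra. }
  apply Rabs_le. lra.
Qed.

Lemma theta_d_infty nu : 0 < nu ->
  is_lim_seq (fun d : nat => INR d * (1 - theta d nu)) (2 / (nu + 2)).
Proof.
  intros Hnu. apply (filterlim_of_abs_le _ (fun d => 2 / INR d)); [| apply is_lim_seq_div_INR].
  exists 3%nat. intros d Hd.
  pose proof (one_minus_theta_bounds d nu Hd (Rlt_le _ _ Hnu)) as [Hlo Hhi].
  assert (HD : 3 <= INR d) by (apply le_INR in Hd; simpl in Hd; lra).
  set (D := INR d) in *. set (b := 1 - theta d nu) in *.
  assert (Hdown : 0 <= D * b - 2 / (nu + 2)).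
  { replace (D * b - 2 / (nu + 2)) with (D * (b - 2 / ((2 + nu) * D))) by (field; split; nra).
    nra. }
  assert (Hup : D * b - 2 / (nu + 2) <= 2 / D).
  { replace (D * b - 2 / (nu + 2)) with
      (D * (b - 2 / ((2 + nu) * D - 2)) + 4 / ((2 + nu) * ((2 + nu) * D - 2)))
      by (field; split; nra).
    assert (4 / ((2 + nu) * ((2 + nu) * D - 2)) <= 2 / D).
    { apply (Rle_trans _ (4 / (2 * D))); [|right; field; lra].
      apply Rmult_le_compat_l; [lra|]. apply Rinv_le_contravar; nra. }
    nra. }
  apply Rabs_le. lra.
Qed.

Theorem proposition2p8 :
  (forall d : nat, (3 <= d)%nat ->
     filterlim (fun nu => (theta d nu - theta d 0) / nu) (at_right 0)
       (locally (INR d / (2 * (INR d - 2) ^ 2)))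
     /\ filterlim (fun nu => nu * (1 - theta d nu)) (Rbar_locally p_infty)
       (locally (2 / INR d)))
  /\
  (forall nu : R, 0 < nu ->
     is_lim_seq (fun d : nat => INR d * (1 - theta d nu)) (2 / (nu + 2))).
Proof.
  split.
  - intros d Hd. split; [apply theta_slope_at_0 | apply theta_nu_infty]; exact Hd.
  - exact theta_d_infty.
Qed.
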